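(* Let $x_2=F(t,x,x_1)$ be a second-order ODE and suppose that for some smooth $H=H(t,x,x_1)$ the system $(S_H)$ admits a nonlocal symmetry $\mathbf{v}=\xi\partial_t+\eta^0\partial_x+\psi^0\partial_w$ (coefficients functions of $(t,x,x_1,w)$) with associated functionally independent functions $z=z(t,x)$, $\zeta=\zeta(t,x,x_1)$, i.e. $\mathbf v(z)=0$, $\mathbf v^{(1)}(\zeta)|_\Delta=0$ and the equation can be written in terms of $\{z,\zeta,\zeta_z\}$ as a first-order ODE. Then: (i) If $\xi\neq0$, the functions $\eta^0/\xi$ and $\widetilde\lambda=\frac{\xi_t+\xi_xx_1+\xi_{x_1}F+\xi_wH}{\xi}$ do not depend on $w$, and the pair $\widetilde{\mathbf X}=\partial_t+\frac{\eta^0}{\xi}\partial_x$, $\widetilde\lambda$ defines a $\lambda$-symmetry of $x_2=F$. (ii) If $\xi=0$, the function $\widetilde\lambda=\frac{\eta^0_t+\eta^0_xx_1+\eta^0_{x_1}F+\eta^0_wH}{\eta^0}$ does not depend on $w$, and the pair $\widetilde{\mathbf X}=\partial_x$, $\widetilde\lambda$ defines a $\lambda$-symmetry of $x_2=F$. In both cases $\{z,\zeta,\zeta_z\}$ is a complete system of invariants of $\widetilde{\mathbf X}^{[\widetilde\lambda,(1)]}$.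
   Context: Let $F=F(t,x,x_1)$ be smooth, and for a smooth $H=H(t,x,x_1)$ let $(S_H)$ be the system $x_2=F(t,x,x_1)$, $w_1=H(t,x,x_1)$ in the dependent variables $x,w$; $\Delta$ denotes the submanifold of the jet space defined by $(S_H)$. $\widetilde D_t=\partial_t+x_1\partial_x+x_2\partial_{x_1}+w_1\partial_w+\cdots$ is the total derivative in these variables, and $D_t=\partial_t+x_1\partial_x+x_2\partial_{x_1}+\cdots$. For $\mathbf v=\xi\partial_t+\eta^0\partial_x+\psi^0\partial_w$ with coefficients depending on $(t,x,x_1,w)$, its prolongation $\mathbf v^{(k)}$ adds $\sum_{i=1}^k(\eta^i\partial_{x_i}+\psi^i\partial_{w_i})$ with $\eta^i=\widetilde D_t(\eta^{i-1})-\widetilde D_t(\xi)x_i$, $\psi^i=\widetilde D_t(\psi^{i-1})-\widetilde D_t(\xi)w_i$. $\mathbf v$ is a (generalized) symmetry of $(S_H)$ if $\mathbf v^{(2)}(x_2-F)$ and $\mathbf v^{(2)}(w_1-H)$ vanish on $\Delta$. A nonlocal symmetry of $x_2=F$ associated to $(S_H)$ is such a symmetry with $(\xi_w)^2+(\eta^0_w)^2\neq0$ for which there exist functionally independent $z=z(t,x)$, $\zeta=\zeta(t,x,x_1)$ (with $\zeta_{x_1}\ne0$) such that $\mathbf v(z)=0$, $\mathbf v^{(1)}(\zeta)|_\Delta=0$, and $x_2=F$ can be written in terms of $\{z,\zeta,\zeta_z\}$, $\zeta_z=D_t\zeta/D_tz$, as a first-order ODE. For $\lambda=\lambda(t,x,x_1)$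 and $\mathbf X=\rho(t,x)\partial_t+\phi^0(t,x)\partial_x$, $\mathbf{X}^{[\lambda,(k)]}=\rho\partial_t+\phi^0\partial_x+\sum_{i=1}^k\phi^{[\lambda,(i)]}\partial_{x_i}$, $\phi^{[\lambda,(0)]}=\phi^0$, $\phi^{[\lambda,(i)]}=D_t(\phi^{[\lambda,(i-1)]})-D_t(\rho)x_i+\lambda(\phi^{[\lambda,(i-1)]}-\rho x_i)$; $(\mathbf X,\lambda)$ defines a $\lambda$-symmetry of $x_2=F$ if $\mathbf X^{[\lambda,(2)]}$ is tangent to $\{x_2=F\}$. *)

From Stdlib Require Import Reals List ClassicalEpsilon.
Open Scope R_scope.

Definition deriv1 (g : R -> R) (a : R) : R :=
  epsilon (inhabits 0%R) (fun l => derivable_pt_lim g a l).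

Definition fun4 := R -> R -> R -> R -> R.
Definition fun3 := R -> R -> R -> R.
Definition fun2 := R -> R -> R.

Definition slice4 (i : nat) (f : fun4) (t x x1 w : R) : R -> R :=
  match i with
  | 0%nat => fun s => f s x x1 w
  | 1%nat => fun s => f t s x1 w
  | 2%nat => fun s => f t x s w
  | _ => fun s => f t x x1 s
  end.
Definition pick4 (i : nat) (t x x1 w : R) : R :=
  match i with 0%nat => t | 1%nat => x | 2%nat => x1 | _ => w end.

Definition pd4 (i : nat) (f : fun4) : fun4 :=
  fun t x x1 w => deriv1 (slice4 i f t x x1 w) (pick4 i t x x1 w).

Fixpoint iter4 (l : list nat) (f : fun4) : fun4 :=
  match l with nil => f | i :: l' => pd4 i (iter4 l' f) end.

Definition cont4 (f : fun4) (t x x1 w : R) : Prop :=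
  forall eps, 0 < eps -> exists d, 0 < d /\
    forall t' x' x1' w', Rabs (t' - t) < d -> Rabs (x' - x) < d ->
      Rabs (x1' - x1) < d -> Rabs (w' - w) < d ->
      Rabs (f t' x' x1' w' - f t x x1 w) < eps.

Definition smooth4 (f : fun4) : Prop :=
  forall l : list nat,
    (forall t x x1 w, cont4 (iter4 l f) t x x1 w) /\
    (forall i t x x1 w, (i < 4)%nat ->
       exists d, derivable_pt_lim (slice4 i (iter4 l f) t x x1 w) (pick4 i t x x1 w) d).

Definition lift3 (F : fun3) : fun4 := fun t x x1 _ => F t x x1.
Definition lift2 (g : fun2) : fun4 := fun t x _ _ => g t x.
Definition smooth3 (F : fun3) : Prop := smooth4 (lift3 F).
Definition smooth2 (g : fun2) : Prop := smooth4 (lift2 g).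

Definition pt4 := pd4 0.  Definition px4 := pd4 1.
Definition px14 := pd4 2. Definition pw4 := pd4 3.
Definition pt3 (F : fun3) : fun3 := fun t x x1 => deriv1 (fun s => F s x x1) t.
Definition px3 (F : fun3) : fun3 := fun t x x1 => deriv1 (fun s => F t s x1) x.
Definition px13 (F : fun3) : fun3 := fun t x x1 => deriv1 (fun s => F t x s) x1.
Definition pt2 (g : fun2) : fun2 := fun t x => deriv1 (fun s => g s x) t.
Definition px2 (g : fun2) : fun2 := fun t x => deriv1 (fun s => g t s) x.

Definition Dt2 (g : fun2) : fun3 := fun t x x1 => pt2 g t x + x1 * px2 g t x.
Definition Dt3 (f : fun3) : fun4 :=
  fun t x x1 x2 => pt3 f t x x1 + x1 * px3 f t x x1 + x2 * px13 f t x x1.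

(* On (the prolongation of) Delta, with coordinates (t,x,x1,w), the total derivative
   \tilde D_t acts on functions of (t,x,x1,w) as
   A f = f_t + x1 f_x + F f_{x1} + H f_w. *)
Definition Atot (F H : fun3) (f : fun4) : fun4 :=
  fun t x x1 w => pt4 f t x x1 w + x1 * px4 f t x x1 w
                 + F t x x1 * px14 f t x x1 w + H t x x1 * pw4 f t x x1 w.

Definition eta1 (F H : fun3) (xi eta0 : fun4) : fun4 :=
  fun t x x1 w => Atot F H eta0 t x x1 w - Atot F H xi t x x1 w * x1.

(* (generalized) symmetry v = xi d_t + eta0 d_x + psi0 d_w of (S_H):
   v^(2)(x2 - F) and v^(2)(w1 - H) vanish on Delta, where on Delta
   eta^2 = \tilde D_t(eta^1) - \tilde D_t(xi) x2  becomes  A(eta^1) - A(xi) F,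
   psi^1 = \tilde D_t(psi^0) - \tilde D_t(xi) w1 becomes  A(psi^0) - A(xi) H. *)
Definition gen_symmetry (F H : fun3) (xi eta0 psi0 : fun4) : Prop :=
  (forall t x x1 w,
     (Atot F H (eta1 F H xi eta0) t x x1 w - Atot F H xi t x x1 w * F t x x1)
     - (xi t x x1 w * pt3 F t x x1 + eta0 t x x1 w * px3 F t x x1
        + eta1 F H xi eta0 t x x1 w * px13 F t x x1) = 0)
  /\
  (forall t x x1 w,
     (Atot F H psi0 t x x1 w - Atot F H xi t x x1 w * H t x x1)
     - (xi t x x1 w * pt3 H t x x1 + eta0 t x x1 w * px3 H t x x1
        + eta1 F H xi eta0 t x x1 w * px13 H t x x1) = 0).

Definition zeta_z (z : fun2) (zeta : fun3) : fun4 :=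
  fun t x x1 x2 => Dt3 zeta t x x1 x2 / Dt2 z t x x1.

(* z(t,x), zeta(t,x,x1): the 2x3 Jacobian [[z_t, z_x, 0],[zeta_t, zeta_x, zeta_x1]] has rank 2 *)
Definition func_indep2 (z : fun2) (zeta : fun3) (t x x1 : R) : Prop :=
  pt2 z t x * px3 zeta t x x1 - px2 z t x * pt3 zeta t x x1 <> 0
  \/ pt2 z t x * px13 zeta t x x1 <> 0
  \/ px2 z t x * px13 zeta t x x1 <> 0.

Definition det3 (a11 a12 a13 a21 a22 a23 a31 a32 a33 : R) : R :=
  a11 * (a22 * a33 - a23 * a32) - a12 * (a21 * a33 - a23 * a31)
  + a13 * (a21 * a32 - a22 * a31).

(* three functions f,g,h of (t,x,x1,x2): the 3x4 Jacobian has rank 3 at the point *)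
Definition func_indep3 (f g h : fun4) (t x x1 x2 : R) : Prop :=
  exists i j k : nat, (i < j)%nat /\ (j < k)%nat /\ (k < 4)%nat /\
    det3 (pd4 i f t x x1 x2) (pd4 j f t x x1 x2) (pd4 k f t x x1 x2)
         (pd4 i g t x x1 x2) (pd4 j g t x x1 x2) (pd4 k g t x x1 x2)
         (pd4 i h t x x1 x2) (pd4 j h t x x1 x2) (pd4 k h t x x1 x2) <> 0.

(* ---------- lambda-prolongations of X = rho(t,x) d_t + phi0(t,x) d_x ---------- *)
Definition phi1 (rho phi0 : fun2) (lam : fun3) : fun3 :=
  fun t x x1 => Dt2 phi0 t x x1 - Dt2 rho t x x1 * x1
                + lam t x x1 * (phi0 t x - rho t x * x1).
Definition phi2 (rho phi0 : fun2) (lam : fun3) : fun4 :=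
  fun t x x1 x2 => Dt3 (phi1 rho phi0 lam) t x x1 x2 - Dt2 rho t x x1 * x2
                   + lam t x x1 * (phi1 rho phi0 lam t x x1 - rho t x * x2).

(* (X, lam) is a lambda-symmetry of x2 = F: X^{[lam,(2)]} is tangent to {x2 = F},
   i.e. X^{[lam,(2)]}(x2 - F) = 0 on x2 = F. *)
Definition lambda_symmetry (F : fun3) (rho phi0 : fun2) (lam : fun3) : Prop :=
  forall t x x1,
    phi2 rho phi0 lam t x x1 (F t x x1)
    - (rho t x * pt3 F t x x1 + phi0 t x * px3 F t x x1
       + phi1 rho phi0 lam t x x1 * px13 F t x x1) = 0.

(* {z, zeta, zeta_z} is a complete system of invariants of the lambda-prolongation:
   z, zeta are functionally independent invariants of X^{[lam,(1)]} on (t,x,x1)-space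
   (2 = dim - 1 of them), and zeta_z is an invariant of X^{[lam,(2)]}, with z, zeta, zeta_z
   functionally independent on (t,x,x1,x2)-space (3 = dim - 1 of them), wherever
   zeta_z is defined (D_t z <> 0). *)
Definition complete_invariants (rho phi0 : fun2) (lam : fun3) (z : fun2) (zeta : fun3) : Prop :=
  (forall t x, rho t x * pt2 z t x + phi0 t x * px2 z t x = 0)
  /\ (forall t x x1, rho t x * pt3 zeta t x x1 + phi0 t x * px3 zeta t x x1
                     + phi1 rho phi0 lam t x x1 * px13 zeta t x x1 = 0)
  /\ (forall t x x1, func_indep2 z zeta t x x1)
  /\ (forall t x x1 x2, Dt2 z t x x1 <> 0 ->
        rho t x * pt4 (zeta_z z zeta) t x x1 x2 + phi0 t x * px4 (zeta_z z zeta) t x x1 x2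
        + phi1 rho phi0 lam t x x1 * px14 (zeta_z z zeta) t x x1 x2
        + phi2 rho phi0 lam t x x1 x2 * pw4 (zeta_z z zeta) t x x1 x2 = 0)
  /\ (forall t x x1 x2, Dt2 z t x x1 <> 0 ->
        func_indep3 (lift2 z) (lift3 zeta) (zeta_z z zeta) t x x1 x2).

(* In both cases the coefficients of v factor as xi = rho mu, eta0 = phi0 mu
   with rho, phi0 functions of (t,x) and mu nowhere zero (xi <> 0: mu = xi,
   rho = 1, phi0 = -z_t/z_x, forced by v(z) = 0; xi = 0: mu = eta0, rho = 0,
   phi0 = 1).  With lambda = A(mu)/mu, A the total derivative on Delta,
   eta1 = mu (D_t phi0 - D_t rho x1 + lambda (phi0 - rho x1)); v^(1)(zeta) = 0
   then forces lambda to be independent of w (directly off the graph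
   x1 = phi0/rho, by continuity on it), so eta1 = mu phi^[lambda,(1)] and the
   first symmetry condition of (S_H) is mu times the lambda-symmetry condition.
   Finally X^[lambda,(2)] D_t = D_t X^[lambda,(1)] + lambda X^[lambda,(1)]
   - (D_t rho + lambda rho) D_t makes zeta_z = D_t zeta / D_t z invariant, and
   d zeta_z/d x2 = zeta_x1 / D_t z <> 0 gives independence. *)

From Stdlib Require Import Reals Lra Lia ClassicalEpsilon FunctionalExtensionality.
From Coquelicot Require Import Coquelicot.
Open Scope R_scope.

Ltac funext3 := apply functional_extensionality; intro;
  apply functional_extensionality; intro; apply functional_extensionality; intro.
Ltac funext4 := funext3; apply functional_extensionality; intro.

(** * One-variable derivatives *)

Lemma deriv1_eq g a l : derivable_pt_lim g a l -> deriv1 g a = l.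
Proof.
  intro Hl. unfold deriv1.
  assert (Hex : exists l, derivable_pt_lim g a l) by eauto.
  exact (uniqueness_limite _ _ _ _ (epsilon_spec (inhabits 0) _ Hex) Hl).
Qed.

Lemma deriv1_const c a : deriv1 (fun _ => c) a = 0.
Proof. apply deriv1_eq, derivable_pt_lim_const. Qed.

(* The differentiation rules, stated on explicit lambda-terms so that the
   derivative of an expression can be computed by matching its syntax. *)
Lemma dl_val g a l l' : derivable_pt_lim g a l -> l = l' -> derivable_pt_lim g a l'.
Proof. intros H ->; exact H. Qed.
Lemma dl_const c a : derivable_pt_lim (fun _ => c) a 0.
Proof. apply derivable_pt_lim_const. Qed.
Lemma dl_id a : derivable_pt_lim (fun s => s) a 1.
Proof. apply derivable_pt_lim_id. Qed.
Lemma dl_plus f g a lf lg : derivable_pt_lim f a lf -> derivable_pt_lim g a lg ->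
  derivable_pt_lim (fun s => f s + g s) a (lf + lg).
Proof. apply derivable_pt_lim_plus. Qed.
Lemma dl_minus f g a lf lg : derivable_pt_lim f a lf -> derivable_pt_lim g a lg ->
  derivable_pt_lim (fun s => f s - g s) a (lf - lg).
Proof. apply derivable_pt_lim_minus. Qed.
Lemma dl_mult f g a lf lg : derivable_pt_lim f a lf -> derivable_pt_lim g a lg ->
  derivable_pt_lim (fun s => f s * g s) a (lf * g a + f a * lg).
Proof. apply derivable_pt_lim_mult. Qed.
Lemma dl_opp f a lf : derivable_pt_lim f a lf ->
  derivable_pt_lim (fun s => - f s) a (- lf).
Proof. apply derivable_pt_lim_opp. Qed.
Lemma dl_inv g a l : derivable_pt_lim g a l -> g a <> 0 ->
  derivable_pt_lim (fun s => / g s) a (- l * (/ g a * / g a)).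
Proof.
  intros Hg Hnz.
  apply (derivable_pt_lim_ext (fun s => 1 / g s)); [intro s; unfold Rdiv; ring|].
  eapply dl_val; [apply (derivable_pt_lim_div (fun _ => 1) g); eauto using dl_const|].
  unfold Rsqr; field; exact Hnz.
Qed.

(** * Continuity on R^4 *)

Lemma cont4_comp (h : R -> R -> R) (f g : fun4) t x x1 w :
  continuity_2d_pt h (f t x x1 w) (g t x x1 w) ->
  cont4 f t x x1 w -> cont4 g t x x1 w ->
  cont4 (fun a b c d => h (f a b c d) (g a b c d)) t x x1 w.
Proof.
  intros Hh Cf Cg eps Heps.
  destruct (Hh (mkposreal eps Heps)) as [d Hd].
  destruct (Cf d (cond_pos d)) as [d1 [Hd1 H1]].
  destruct (Cg d (cond_pos d)) as [d2 [Hd2 H2]].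
  exists (Rmin d1 d2). split; [apply Rmin_pos; assumption|].
  intros t' x' x1' w' Ht Hx Hx1 Hw.
  pose proof (Rmin_l d1 d2). pose proof (Rmin_r d1 d2).
  apply Hd; [apply H1 | apply H2]; lra.
Qed.

Definition C4 (f : fun4) : Prop := forall t x x1 w, cont4 f t x x1 w.

Lemma C4_plus f g : C4 f -> C4 g -> C4 (fun a b c d => f a b c d + g a b c d).
Proof.
  intros Cf Cg t x x1 w.
  exact (cont4_comp (fun u v => u + v) f g t x x1 w
    (continuity_2d_pt_plus _ _ _ _ (continuity_2d_pt_id1 _ _) (continuity_2d_pt_id2 _ _))
    (Cf _ _ _ _) (Cg _ _ _ _)).
Qed.
Lemma C4_mult f g : C4 f -> C4 g -> C4 (fun a b c d => f a b c d * g a b c d).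
Proof.
  intros Cf Cg t x x1 w.
  exact (cont4_comp (fun u v => u * v) f g t x x1 w
    (continuity_2d_pt_mult _ _ _ _ (continuity_2d_pt_id1 _ _) (continuity_2d_pt_id2 _ _))
    (Cf _ _ _ _) (Cg _ _ _ _)).
Qed.
Lemma C4_opp f : C4 f -> C4 (fun a b c d => - f a b c d).
Proof.
  intros Cf t x x1 w.
  exact (cont4_comp (fun u _ => - u) f f t x x1 w
    (continuity_2d_pt_opp _ _ _ (continuity_2d_pt_id1 _ _)) (Cf _ _ _ _) (Cf _ _ _ _)).
Qed.
Lemma C4_inv f : C4 f -> (forall a b c d, f a b c d <> 0) ->
  C4 (fun a b c d => / f a b c d).
Proof.
  intros Cf Hnz t x x1 w.
  exact (cont4_comp (fun u _ => / u) f f t x x1 w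
    (continuity_2d_pt_inv _ _ _ (continuity_2d_pt_id1 _ _) (Hnz _ _ _ _))
    (Cf _ _ _ _) (Cf _ _ _ _)).
Qed.
Lemma C4_const c : C4 (fun _ _ _ _ => c).
Proof.
  intros t x x1 w eps Heps. exists 1. split; [lra|].
  intros. unfold Rminus. rewrite Rplus_opp_r, Rabs_R0. exact Heps.
Qed.

Definition coord (k : nat) : fun4 := fun t x x1 w => pick4 k t x x1 w.

Lemma C4_coord k : C4 (coord k).
Proof.
  intros t x x1 w eps Heps. exists eps. split; [exact Heps|].
  intros. unfold coord. destruct k as [|[|[|k]]]; assumption.
Qed.

Lemma indep_w_by_continuity (g : fun4) (c : fun2) : C4 g ->
  (forall t x x1 w w', x1 <> c t x -> g t x x1 w = g t x x1 w') ->
  forall t x x1 w w', g t x x1 w = g t x x1 w'.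
Proof.
  intros Cg Hoff t x x1 w w'.
  destruct (Req_dec x1 (c t x)) as [Hon | Hne]; [|exact (Hoff _ _ _ _ _ Hne)].
  apply Rminus_diag_uniq.
  destruct (Req_dec (g t x x1 w - g t x x1 w') 0) as [E | E]; [exact E | exfalso].
  set (eps := Rabs (g t x x1 w - g t x x1 w')).
  assert (Heps : 0 < eps) by (apply Rabs_pos_lt, E).
  destruct (Cg t x x1 w (eps / 2) ltac:(lra)) as [d1 [Hd1 H1]].
  destruct (Cg t x x1 w' (eps / 2) ltac:(lra)) as [d2 [Hd2 H2]].
  (* a nearby point off the graph, where the two values agree *)
  set (y := x1 + Rmin d1 d2 / 2).
  assert (Hm : 0 < Rmin d1 d2) by (apply Rmin_pos; assumption).
  pose proof (Rmin_l d1 d2). pose proof (Rmin_r d1 d2).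
  assert (Hy : Rabs (y - x1) = Rmin d1 d2 / 2)
    by (unfold y; replace (x1 + Rmin d1 d2 / 2 - x1) with (Rmin d1 d2 / 2) by ring;
        apply Rabs_pos_eq; lra).
  assert (R0 : forall a, Rabs (a - a) = 0)
    by (intro a; unfold Rminus; rewrite Rplus_opp_r; apply Rabs_R0).
  pose proof (H1 t x y w ltac:(rewrite R0; lra) ltac:(rewrite R0; lra)
                ltac:(rewrite Hy; lra) ltac:(rewrite R0; lra)) as A1.
  pose proof (H2 t x y w' ltac:(rewrite R0; lra) ltac:(rewrite R0; lra)
                ltac:(rewrite Hy; lra) ltac:(rewrite R0; lra)) as A2.
  rewrite (Hoff t x y w w') in A1 by (unfold y; lra).
  pose proof (Rabs_triang (g t x x1 w - g t x y w') (g t x y w' - g t x x1 w')) as T.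
  replace (g t x x1 w - g t x y w' + (g t x y w' - g t x x1 w'))
    with (g t x x1 w - g t x x1 w') in T by ring.
  rewrite Rabs_minus_sym in A1. fold eps in T. lra.
Qed.

(** * Partial derivatives *)

Definition D4 (f : fun4) : Prop := forall i t x x1 w, exists d,
  derivable_pt_lim (slice4 i f t x x1 w) (pick4 i t x x1 w) d.

Lemma slice_op2 (op : R -> R -> R) i f g t x x1 w :
  slice4 i (fun a b c d => op (f a b c d) (g a b c d)) t x x1 w
  = fun s => op (slice4 i f t x x1 w s) (slice4 i g t x x1 w s).
Proof. destruct i as [|[|[|i]]]; reflexivity. Qed.
Lemma slice_op1 (op : R -> R) i f t x x1 w :
  slice4 i (fun a b c d => op (f a b c d)) t x x1 w
  = fun s => op (slice4 i f t x x1 w s).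
Proof. destruct i as [|[|[|i]]]; reflexivity. Qed.
Lemma slice_pick i f t x x1 w : slice4 i f t x x1 w (pick4 i t x x1 w) = f t x x1 w.
Proof. destruct i as [|[|[|i]]]; reflexivity. Qed.

Lemma pd4_val f i t x x1 w d :
  derivable_pt_lim (slice4 i f t x x1 w) (pick4 i t x x1 w) d -> pd4 i f t x x1 w = d.
Proof. exact (deriv1_eq _ _ _). Qed.
Lemma pd4_spec f i t x x1 w : D4 f ->
  derivable_pt_lim (slice4 i f t x x1 w) (pick4 i t x x1 w) (pd4 i f t x x1 w).
Proof. intro Df. destruct (Df i t x x1 w) as [d Hd]. rewrite (pd4_val _ _ _ _ _ _ _ Hd). exact Hd. Qed.

Lemma pd4_plus i f g t x x1 w : D4 f -> D4 g ->
  pd4 i (fun a b c d => f a b c d + g a b c d) t x x1 w = pd4 i f t x x1 w + pd4 i g t x x1 w.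
Proof. intros Df Dg. apply pd4_val. rewrite slice_op2. apply dl_plus; apply pd4_spec; assumption. Qed.
Lemma pd4_mult i f g t x x1 w : D4 f -> D4 g ->
  pd4 i (fun a b c d => f a b c d * g a b c d) t x x1 w
  = pd4 i f t x x1 w * g t x x1 w + f t x x1 w * pd4 i g t x x1 w.
Proof.
  intros Df Dg. apply pd4_val. rewrite slice_op2.
  eapply dl_val; [apply dl_mult; apply pd4_spec; assumption|]. rewrite !slice_pick. reflexivity.
Qed.
Lemma pd4_opp i f t x x1 w : D4 f ->
  pd4 i (fun a b c d => - f a b c d) t x x1 w = - pd4 i f t x x1 w.
Proof. intro Df. apply pd4_val. rewrite slice_op1. apply dl_opp, pd4_spec, Df. Qed.
Lemma pd4_inv i f t x x1 w : D4 f -> f t x x1 w <> 0 ->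
  pd4 i (fun a b c d => / f a b c d) t x x1 w
  = - pd4 i f t x x1 w * (/ f t x x1 w * / f t x x1 w).
Proof.
  intros Df Hnz. apply pd4_val. rewrite slice_op1.
  eapply dl_val; [apply dl_inv; [apply pd4_spec, Df | rewrite slice_pick; exact Hnz]|].
  rewrite slice_pick. reflexivity.
Qed.
Lemma pd4_div i f g t x x1 w : D4 f -> D4 g -> g t x x1 w <> 0 ->
  pd4 i (fun a b c d => f a b c d / g a b c d) t x x1 w
  = (pd4 i f t x x1 w * g t x x1 w - pd4 i g t x x1 w * f t x x1 w) / (g t x x1 w)².
Proof.
  intros Df Dg Hnz. apply pd4_val. rewrite slice_op2.
  eapply dl_val; [apply derivable_pt_lim_div; try apply pd4_spec; auto; rewrite slice_pick; exact Hnz|].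
  rewrite !slice_pick. reflexivity.
Qed.
Lemma pd4_const i c t x x1 w : pd4 i (fun _ _ _ _ => c) t x x1 w = 0.
Proof. apply pd4_val. destruct i as [|[|[|i]]]; exact (dl_const _ _). Qed.

Lemma pd4_coord i k : exists c, pd4 i (coord k) = fun _ _ _ _ => c.
Proof.
  destruct i as [|[|[|i]]]; destruct k as [|[|[|k]]];
  first [ exists 1; funext4; apply pd4_val; exact (dl_id _)
        | exists 0; funext4; apply pd4_val; exact (dl_const _ _) ].
Qed.

Lemma D4_plus f g : D4 f -> D4 g -> D4 (fun a b c d => f a b c d + g a b c d).
Proof. intros Df Dg i t x x1 w. eexists. rewrite slice_op2. apply dl_plus; apply pd4_spec; assumption. Qed.
Lemma D4_mult f g : D4 f -> D4 g -> D4 (fun a b c d => f a b c d * g a b c d).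
Proof. intros Df Dg i t x x1 w. eexists. rewrite slice_op2. apply dl_mult; apply pd4_spec; assumption. Qed.
Lemma D4_opp f : D4 f -> D4 (fun a b c d => - f a b c d).
Proof. intros Df i t x x1 w. eexists. rewrite slice_op1. apply dl_opp, pd4_spec, Df. Qed.
Lemma D4_inv f : D4 f -> (forall a b c d, f a b c d <> 0) -> D4 (fun a b c d => / f a b c d).
Proof.
  intros Df Hnz i t x x1 w. eexists. rewrite slice_op1.
  apply dl_inv; [apply pd4_spec, Df | rewrite slice_pick; apply Hnz].
Qed.
Lemma D4_const c : D4 (fun _ _ _ _ => c).
Proof. intros i t x x1 w. exists 0. destruct i as [|[|[|i]]]; exact (dl_const _ _). Qed.
Lemma D4_coord k : D4 (coord k).
Proof.
  intros i t x x1 w. unfold coord.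
  destruct i as [|[|[|i]]]; destruct k as [|[|[|k]]]; eexists; first [exact (dl_id _) | exact (dl_const _ _)].
Qed.

(** * Smoothness *)

(* [smn n f]: f has n levels of continuous, partially differentiable
   derivatives.  [smooth4 f] is equivalent to [smn n f] for all n, and
   [smn] is proved closed under the ring operations by induction on n. *)
Fixpoint smn (n : nat) (f : fun4) : Prop :=
  match n with 0%nat => True | S m => C4 f /\ D4 f /\ forall i, smn m (pd4 i f) end.

Lemma iter4_app l m f : iter4 (l ++ m) f = iter4 l (iter4 m f).
Proof. induction l; simpl; congruence. Qed.

Lemma smooth_pd i f : smooth4 f -> smooth4 (pd4 i f).
Proof.
  intros Hf l. change (pd4 i f) with (iter4 (i :: nil) f). rewrite <- iter4_app. apply Hf.
Qed.
Lemma smooth_C4 f : smooth4 f -> C4 f.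
Proof. intro Hf. exact (proj1 (Hf nil)). Qed.
Lemma smooth_D4 f : smooth4 f -> D4 f.
Proof.
  intros Hf i t x x1 w. destruct (Hf nil) as [_ Hd].
  destruct i as [|[|[|[|i]]]]; try (apply Hd; lia).
  exact (Hd 3%nat t x x1 w ltac:(lia)).
Qed.

Lemma smooth_smn f : smooth4 f -> forall n, smn n f.
Proof.
  intros Hf n. revert f Hf. induction n as [|n IH]; intros f Hf; simpl; [exact I|].
  split; [apply smooth_C4, Hf|]. split; [apply smooth_D4, Hf|].
  intro i. apply IH, smooth_pd, Hf.
Qed.
Lemma smn_iter l : forall k f, smn (length l + k) f -> smn k (iter4 l f).
Proof.
  induction l as [|a l IH]; intros k f Hf; simpl in *; [exact Hf|].
  assert (Hl : smn (S k) (iter4 l f)) by (apply IH; rewrite Nat.add_succ_r; exact Hf).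
  exact (proj2 (proj2 Hl) a).
Qed.
Lemma smn_smooth f : (forall n, smn n f) -> smooth4 f.
Proof. intros Hf l. destruct (smn_iter l 1 f (Hf _)) as [Cf [Df _]].
  split; [exact Cf | intros i t x x1 w _; apply Df]. Qed.
Lemma smn_le n f : smn (S n) f -> smn n f.
Proof.
  revert f; induction n as [|n IH]; intros f Hf; simpl in *; [exact I|].
  destruct Hf as [Cf [Df Pf]]. repeat split; auto.
Qed.

Lemma smn_const n c : smn n (fun _ _ _ _ => c).
Proof.
  revert c; induction n as [|n IH]; intro c; simpl; [exact I|].
  split; [apply C4_const|]. split; [apply D4_const|].
  intro i. replace (pd4 i (fun _ _ _ _ => c)) with (fun _ _ _ _ : R => 0); [apply IH|].
  funext4. symmetry. apply pd4_const.
Qed.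
Lemma smn_coord n k : smn n (coord k).
Proof.
  destruct n; simpl; [exact I|]. split; [apply C4_coord|]. split; [apply D4_coord|].
  intro i. destruct (pd4_coord i k) as [c ->]. apply smn_const.
Qed.
Lemma smn_plus n : forall f g, smn n f -> smn n g -> smn n (fun a b c d => f a b c d + g a b c d).
Proof.
  induction n as [|n IH]; intros f g Hf Hg; simpl in *; [exact I|].
  destruct Hf as [Cf [Df Pf]], Hg as [Cg [Dg Pg]].
  split; [apply C4_plus; assumption|]. split; [apply D4_plus; assumption|].
  intro i. replace (pd4 i _) with (fun a b c d => pd4 i f a b c d + pd4 i g a b c d); [auto|].
  funext4. rewrite pd4_plus; auto.
Qed.
Lemma smn_opp n : forall f, smn n f -> smn n (fun a b c d => - f a b c d).
Proof.
  induction n as [|n IH]; intros f Hf; simpl in *; [exact I|].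
  destruct Hf as [Cf [Df Pf]].
  split; [apply C4_opp; assumption|]. split; [apply D4_opp; assumption|].
  intro i. replace (pd4 i _) with (fun a b c d => - pd4 i f a b c d); [auto|].
  funext4. rewrite pd4_opp; auto.
Qed.
Lemma smn_mult n : forall f g, smn n f -> smn n g -> smn n (fun a b c d => f a b c d * g a b c d).
Proof.
  induction n as [|n IH]; intros f g Hf Hg; simpl; [exact I|].
  pose proof (smn_le _ _ Hf) as Hf'. pose proof (smn_le _ _ Hg) as Hg'.
  destruct Hf as [Cf [Df Pf]], Hg as [Cg [Dg Pg]].
  split; [apply C4_mult; assumption|]. split; [apply D4_mult; assumption|].
  intro i.
  replace (pd4 i _) with (fun a b c d => pd4 i f a b c d * g a b c d + f a b c d * pd4 i g a b c d).
  - apply smn_plus; apply IH; auto.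
  - funext4. rewrite pd4_mult; auto.
Qed.
Lemma smn_inv n : forall f, smn n f -> (forall a b c d, f a b c d <> 0) ->
  smn n (fun a b c d => / f a b c d).
Proof.
  induction n as [|n IH]; intros f Hf Hnz; simpl; [exact I|].
  pose proof (smn_le _ _ Hf) as Hf'. destruct Hf as [Cf [Df Pf]].
  split; [apply C4_inv; assumption|]. split; [apply D4_inv; assumption|].
  intro i.
  replace (pd4 i _) with (fun a b c d => - pd4 i f a b c d * (/ f a b c d * / f a b c d)).
  - apply smn_mult; [apply smn_opp; auto | apply smn_mult; apply IH; auto].
  - funext4. rewrite pd4_inv; auto.
Qed.

Lemma Sm_const c : smooth4 (fun _ _ _ _ => c).
Proof. apply smn_smooth; intro; apply smn_const. Qed.
Lemma Sm_x1 : smooth4 (fun _ _ x1 _ => x1).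
Proof. apply smn_smooth; intro; apply (smn_coord _ 2). Qed.
Lemma Sm_w : smooth4 (fun _ _ _ w => w).
Proof. apply smn_smooth; intro; apply (smn_coord _ 3). Qed.
Lemma Sm_plus f g : smooth4 f -> smooth4 g -> smooth4 (fun a b c d => f a b c d + g a b c d).
Proof. intros; apply smn_smooth; intro; apply smn_plus; apply smooth_smn; assumption. Qed.
Lemma Sm_mult f g : smooth4 f -> smooth4 g -> smooth4 (fun a b c d => f a b c d * g a b c d).
Proof. intros; apply smn_smooth; intro; apply smn_mult; apply smooth_smn; assumption. Qed.
Lemma Sm_opp f : smooth4 f -> smooth4 (fun a b c d => - f a b c d).
Proof. intros; apply smn_smooth; intro; apply smn_opp; apply smooth_smn; assumption. Qed.
Lemma Sm_minus f g : smooth4 f -> smooth4 g -> smooth4 (fun a b c d => f a b c d - g a b c d).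
Proof. intros. apply Sm_plus; [|apply Sm_opp]; assumption. Qed.
Lemma Sm_div f g : smooth4 f -> smooth4 g -> (forall a b c d, g a b c d <> 0) ->
  smooth4 (fun a b c d => f a b c d / g a b c d).
Proof.
  intros Hf Hg Hnz. apply Sm_mult; [exact Hf|].
  apply smn_smooth; intro; apply smn_inv; [apply smooth_smn|]; assumption.
Qed.

Lemma Sm_pt3 g : smooth3 g -> smooth3 (pt3 g). Proof. exact (smooth_pd 0 _). Qed.
Lemma Sm_px3 g : smooth3 g -> smooth3 (px3 g). Proof. exact (smooth_pd 1 _). Qed.
Lemma Sm_px13 g : smooth3 g -> smooth3 (px13 g). Proof. exact (smooth_pd 2 _). Qed.
Lemma Sm_pt2 g : smooth2 g -> smooth2 (pt2 g). Proof. exact (smooth_pd 0 _). Qed.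
Lemma Sm_px2 g : smooth2 g -> smooth2 (px2 g). Proof. exact (smooth_pd 1 _). Qed.

(* Proves smoothness of an expression built from smooth functions of
   (t,x), (t,x,x1), (t,x,x1,w) and their partial derivatives; division leaves
   the nonvanishing of the denominator as a side goal. *)
Ltac solve_smooth := repeat match goal with
 | |- smooth4 (fun _ _ _ _ => ?c) => apply Sm_const
 | |- smooth4 (fun _ _ x1 _ => x1) => apply Sm_x1
 | |- smooth4 (fun _ _ _ w => w) => apply Sm_w
 | |- smooth4 (fun a b c d => _ + _) => apply Sm_plus
 | |- smooth4 (fun a b c d => _ - _) => apply Sm_minus
 | |- smooth4 (fun a b c d => _ * _) => apply Sm_mult
 | |- smooth4 (fun a b c d => _ / _) => apply Sm_div
 | |- smooth4 (fun a b c d => - _) => apply Sm_opp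
 | |- smooth4 (fun a b c d => pd4 ?i ?g a b c d) => apply smooth_pd
 | |- smooth4 (fun a b c d => ?g a b c d) => change (smooth4 g)
 | |- smooth4 (fun a b c d => ?g a b c) => change (smooth3 g)
 | |- smooth4 (fun a b c d => ?g a b) => change (smooth2 g)
 | |- smooth4 (pd4 _ _) => apply smooth_pd
 | |- smooth4 (pt4 _) => apply smooth_pd
 | |- smooth4 (px4 _) => apply smooth_pd
 | |- smooth4 (px14 _) => apply smooth_pd
 | |- smooth4 (pw4 _) => apply smooth_pd
 | |- smooth4 (lift3 ?g) => change (smooth3 g)
 | |- smooth4 (lift2 ?g) => change (smooth2 g)
 | |- smooth3 (pt3 _) => apply Sm_pt3
 | |- smooth3 (px3 _) => apply Sm_px3
 | |- smooth3 (px13 _) => apply Sm_px13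
 | |- smooth2 (pt2 _) => apply Sm_pt2
 | |- smooth2 (px2 _) => apply Sm_px2
 | |- smooth3 (Dt2 ?g) => change (smooth4 (fun t x x1 _ => pt2 g t x + x1 * px2 g t x))
 | |- smooth3 (phi1 ?r ?p ?l) => change (smooth4 (fun t x x1 _ =>
        Dt2 p t x x1 - Dt2 r t x x1 * x1 + l t x x1 * (p t x - r t x * x1)))
 | |- smooth4 (Dt3 ?f) => change (smooth4 (fun t x x1 x2 =>
        pt3 f t x x1 + x1 * px3 f t x x1 + x2 * px13 f t x x1))
 | |- _ => assumption
 end.

Lemma dslice4_t g x x1 w t : smooth4 g -> derivable_pt_lim (fun s => g s x x1 w) t (pt4 g t x x1 w).
Proof. intro S. exact (pd4_spec g 0 t x x1 w (smooth_D4 _ S)). Qed.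
Lemma dslice4_x g t x1 w x : smooth4 g -> derivable_pt_lim (fun s => g t s x1 w) x (px4 g t x x1 w).
Proof. intro S. exact (pd4_spec g 1 t x x1 w (smooth_D4 _ S)). Qed.
Lemma dslice4_x1 g t x w x1 : smooth4 g -> derivable_pt_lim (fun s => g t x s w) x1 (px14 g t x x1 w).
Proof. intro S. exact (pd4_spec g 2 t x x1 w (smooth_D4 _ S)). Qed.
Lemma dslice4_w g t x x1 w : smooth4 g -> derivable_pt_lim (fun s => g t x x1 s) w (pw4 g t x x1 w).
Proof. intro S. exact (pd4_spec g 3 t x x1 w (smooth_D4 _ S)). Qed.
Lemma dslice3_t g x x1 t : smooth3 g -> derivable_pt_lim (fun s => g s x x1) t (pt3 g t x x1).
Proof. intro S. exact (pd4_spec (lift3 g) 0 t x x1 0 (smooth_D4 _ S)). Qed.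
Lemma dslice3_x g t x1 x : smooth3 g -> derivable_pt_lim (fun s => g t s x1) x (px3 g t x x1).
Proof. intro S. exact (pd4_spec (lift3 g) 1 t x x1 0 (smooth_D4 _ S)). Qed.
Lemma dslice3_x1 g t x x1 : smooth3 g -> derivable_pt_lim (fun s => g t x s) x1 (px13 g t x x1).
Proof. intro S. exact (pd4_spec (lift3 g) 2 t x x1 0 (smooth_D4 _ S)). Qed.
Lemma dslice2_t g x t : smooth2 g -> derivable_pt_lim (fun s => g s x) t (pt2 g t x).
Proof. intro S. exact (pd4_spec (lift2 g) 0 t x 0 0 (smooth_D4 _ S)). Qed.
Lemma dslice2_x g t x : smooth2 g -> derivable_pt_lim (fun s => g t s) x (px2 g t x).
Proof. intro S. exact (pd4_spec (lift2 g) 1 t x 0 0 (smooth_D4 _ S)). Qed.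

Ltac solve_deriv := repeat match goal with
 | |- derivable_pt_lim (fun _ => ?c) _ _ => exact (dl_const c _)
 | |- derivable_pt_lim (fun s => s) _ _ => exact (dl_id _)
 | |- derivable_pt_lim (fun s => _ + _) _ _ => eapply dl_plus
 | |- derivable_pt_lim (fun s => _ - _) _ _ => eapply dl_minus
 | |- derivable_pt_lim (fun s => _ * _) _ _ => eapply dl_mult
 | |- derivable_pt_lim (fun s => - _) _ _ => eapply dl_opp
 | |- derivable_pt_lim (?g ?t ?x ?x1) ?w _ => apply (dslice4_w g t x x1 w); solve [solve_smooth]
 | |- derivable_pt_lim (?g ?t ?x) ?x1 _ => apply (dslice3_x1 g t x x1); solve [solve_smooth]
 | |- derivable_pt_lim (?g ?t) ?x _ => apply (dslice2_x g t x); solve [solve_smooth]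
 | |- derivable_pt_lim (fun s => ?g s ?x ?x1 ?w) ?t _ => apply (dslice4_t g x x1 w t); solve [solve_smooth]
 | |- derivable_pt_lim (fun s => ?g ?t s ?x1 ?w) ?x _ => apply (dslice4_x g t x1 w x); solve [solve_smooth]
 | |- derivable_pt_lim (fun s => ?g ?t ?x s ?w) ?x1 _ => apply (dslice4_x1 g t x w x1); solve [solve_smooth]
 | |- derivable_pt_lim (fun s => ?g ?t ?x ?x1 s) ?w _ => apply (dslice4_w g t x x1 w); solve [solve_smooth]
 | |- derivable_pt_lim (fun s => ?g s ?x ?x1) ?t _ => apply (dslice3_t g x x1 t); solve [solve_smooth]
 | |- derivable_pt_lim (fun s => ?g ?t s ?x1) ?x _ => apply (dslice3_x g t x1 x); solve [solve_smooth]
 | |- derivable_pt_lim (fun s => ?g ?t ?x s) ?x1 _ => apply (dslice3_x1 g t x x1); solve [solve_smooth]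
 | |- derivable_pt_lim (fun s => ?g s ?x) ?t _ => apply (dslice2_t g x t); solve [solve_smooth]
 | |- derivable_pt_lim (fun s => ?g ?t s) ?x _ => apply (dslice2_x g t x); solve [solve_smooth]
 end.

Ltac compute_partial := apply pd4_val; cbv beta iota delta [slice4 pick4];
  eapply dl_val; [solve_deriv | cbv beta; ring].

(** * Symmetry of mixed partial derivatives *)

Lemma schwarz_explicit (G Gu Gv Guv Gvu : R -> R -> R) a b :
  (forall u v, derivable_pt_lim (fun s => G s v) u (Gu u v)) ->
  (forall u v, derivable_pt_lim (fun s => G u s) v (Gv u v)) ->
  (forall u v, derivable_pt_lim (fun s => Gv s v) u (Gvu u v)) ->
  (forall u v, derivable_pt_lim (fun s => Gu u s) v (Guv u v)) ->
  continuity_2d_pt Gvu a b -> continuity_2d_pt Guv a b ->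
  Gvu a b = Guv a b.
Proof.
  intros Hu Hv Hvu Huv Cvu Cuv.
  assert (Derive_eq : forall g c l, derivable_pt_lim g c l -> Derive g c = l)
    by (intros g c l Hl; apply is_derive_unique, is_derive_Reals, Hl).
  assert (E1 : forall v, (fun s => Derive (fun r => G s r) v) = (fun s => Gv s v))
    by (intro v; apply functional_extensionality; intro s; apply Derive_eq, Hv).
  assert (E2 : forall u, (fun s => Derive (fun r => G r s) u) = (fun s => Gu u s))
    by (intro u; apply functional_extensionality; intro s; apply Derive_eq, Hu).
  assert (E3 : (fun u v => Derive (fun s => Derive (fun r => G s r) v) u) = Gvu).
  { apply functional_extensionality; intro u; apply functional_extensionality; intro v.
    rewrite E1. apply Derive_eq, Hvu. }
  assert (E4 : (fun u v => Derive (fun s => Derive (fun r => G r s) u) v) = Guv).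
  { apply functional_extensionality; intro u; apply functional_extensionality; intro v.
    rewrite E2. apply Derive_eq, Huv. }
  pose proof (Schwarz G a b) as S. rewrite E3, E4 in S.
  rewrite <- (Derive_eq _ _ _ (Hvu a b)), <- (Derive_eq _ _ _ (Huv a b)), <- E1, <- E2.
  apply S; [|exact Cvu | exact Cuv].
  apply locally_2d_forall. intros u v. repeat split.
  - exists (Gu u v). apply is_derive_Reals, Hu.
  - exists (Gv u v). apply is_derive_Reals, Hv.
  - rewrite E1. exists (Gvu u v). apply is_derive_Reals, Hvu.
  - rewrite E2. exists (Guv u v). apply is_derive_Reals, Huv.
Qed.

Lemma cont3_plane_tx g t x x1 : smooth3 g -> continuity_2d_pt (fun u v => g u v x1) t x.
Proof.
  intros Sg eps. destruct (smooth_C4 _ Sg t x x1 0 eps (cond_pos eps)) as [d [Hd Hg]].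
  exists (mkposreal d Hd). intros u v Hu Hv.
  apply (Hg u v x1 0); try assumption; unfold Rminus; rewrite Rplus_opp_r, Rabs_R0; exact Hd.
Qed.
Lemma cont3_plane_tx1 g t x x1 : smooth3 g -> continuity_2d_pt (fun u v => g u x v) t x1.
Proof.
  intros Sg eps. destruct (smooth_C4 _ Sg t x x1 0 eps (cond_pos eps)) as [d [Hd Hg]].
  exists (mkposreal d Hd). intros u v Hu Hv.
  apply (Hg u x v 0); try assumption; unfold Rminus; rewrite Rplus_opp_r, Rabs_R0; exact Hd.
Qed.
Lemma cont3_plane_xx1 g t x x1 : smooth3 g -> continuity_2d_pt (fun u v => g t u v) x x1.
Proof.
  intros Sg eps. destruct (smooth_C4 _ Sg t x x1 0 eps (cond_pos eps)) as [d [Hd Hg]].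
  exists (mkposreal d Hd). intros u v Hu Hv.
  apply (Hg t u v 0); try assumption; unfold Rminus; rewrite Rplus_opp_r, Rabs_R0; exact Hd.
Qed.

Lemma schwarz3_t_x f t x x1 : smooth3 f -> pt3 (px3 f) t x x1 = px3 (pt3 f) t x x1.
Proof.
  intro Sf.
  apply (schwarz_explicit (fun u v => f u v x1) (fun u v => pt3 f u v x1) (fun u v => px3 f u v x1)
           (fun u v => px3 (pt3 f) u v x1) (fun u v => pt3 (px3 f) u v x1) t x);
  intros; first [apply dslice3_t | apply dslice3_x | apply cont3_plane_tx]; solve_smooth.
Qed.
Lemma schwarz3_t_x1 f t x x1 : smooth3 f -> pt3 (px13 f) t x x1 = px13 (pt3 f) t x x1.
Proof.
  intro Sf.
  apply (schwarz_explicit (fun u v => f u x v) (fun u v => pt3 f u x v) (fun u v => px13 f u x v)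
           (fun u v => px13 (pt3 f) u x v) (fun u v => pt3 (px13 f) u x v) t x1);
  intros; first [apply dslice3_t | apply dslice3_x1 | apply cont3_plane_tx1]; solve_smooth.
Qed.
Lemma schwarz3_x_x1 f t x x1 : smooth3 f -> px3 (px13 f) t x x1 = px13 (px3 f) t x x1.
Proof.
  intro Sf.
  apply (schwarz_explicit (fun u v => f t u v) (fun u v => px3 f t u v) (fun u v => px13 f t u v)
           (fun u v => px13 (px3 f) t u v) (fun u v => px3 (px13 f) t u v) x x1);
  intros; first [apply dslice3_x | apply dslice3_x1 | apply cont3_plane_xx1]; solve_smooth.
Qed.

(** * Total derivatives and lambda-prolongations *)

Lemma Dt3_partials f t x x1 x2 : smooth3 f ->
  pt4 (Dt3 f) t x x1 x2
    = pt3 (pt3 f) t x x1 + x1 * pt3 (px3 f) t x x1 + x2 * pt3 (px13 f) t x x1 /\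
  px4 (Dt3 f) t x x1 x2
    = px3 (pt3 f) t x x1 + x1 * px3 (px3 f) t x x1 + x2 * px3 (px13 f) t x x1 /\
  px14 (Dt3 f) t x x1 x2
    = px13 (pt3 f) t x x1 + px3 f t x x1 + x1 * px13 (px3 f) t x x1
      + x2 * px13 (px13 f) t x x1 /\
  pw4 (Dt3 f) t x x1 x2 = px13 f t x x1.
Proof. intro Sf. unfold Dt3. repeat split; compute_partial. Qed.

Definition prol1 (rho phi0 : fun2) (lam : fun3) (f : fun3) : fun3 :=
  fun t x x1 => rho t x * pt3 f t x x1 + phi0 t x * px3 f t x x1
                + phi1 rho phi0 lam t x x1 * px13 f t x x1.
Definition prol2 (rho phi0 : fun2) (lam : fun3) (g : fun4) : fun4 :=
  fun t x x1 x2 => rho t x * pt4 g t x x1 x2 + phi0 t x * px4 g t x x1 x2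
    + phi1 rho phi0 lam t x x1 * px14 g t x x1 x2
    + phi2 rho phi0 lam t x x1 x2 * pw4 g t x x1 x2.

Lemma prol2_Dt3 rho phi0 lam f t x x1 x2 :
  smooth2 rho -> smooth2 phi0 -> smooth3 lam -> smooth3 f ->
  prol2 rho phi0 lam (Dt3 f) t x x1 x2
  = Dt3 (prol1 rho phi0 lam f) t x x1 x2 + lam t x x1 * prol1 rho phi0 lam f t x x1
    - (Dt2 rho t x x1 + lam t x x1 * rho t x) * Dt3 f t x x1 x2.
Proof.
  intros Sr Sp Sl Sf.
  destruct (Dt3_partials f t x x1 x2 Sf) as [E0 [E1 [E2 E3]]].
  set (p1 := phi1 rho phi0 lam).
  assert (P0 : pt3 (prol1 rho phi0 lam f) t x x1
    = pt2 rho t x * pt3 f t x x1 + rho t x * pt3 (pt3 f) t x x1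
      + (pt2 phi0 t x * px3 f t x x1 + phi0 t x * pt3 (px3 f) t x x1)
      + (pt3 p1 t x x1 * px13 f t x x1 + p1 t x x1 * pt3 (px13 f) t x x1)).
  { unfold pt3 at 1. apply deriv1_eq. unfold prol1, p1.
    eapply dl_val; [solve_deriv | cbv beta; ring]. }
  assert (P1 : px3 (prol1 rho phi0 lam f) t x x1
    = px2 rho t x * pt3 f t x x1 + rho t x * px3 (pt3 f) t x x1
      + (px2 phi0 t x * px3 f t x x1 + phi0 t x * px3 (px3 f) t x x1)
      + (px3 p1 t x x1 * px13 f t x x1 + p1 t x x1 * px3 (px13 f) t x x1)).
  { unfold px3 at 1. apply deriv1_eq. unfold prol1, p1.
    eapply dl_val; [solve_deriv | cbv beta; ring]. }
  assert (P2 : px13 (prol1 rho phi0 lam f) t x x1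
    = rho t x * px13 (pt3 f) t x x1 + phi0 t x * px13 (px3 f) t x x1
      + (px13 p1 t x x1 * px13 f t x x1 + p1 t x x1 * px13 (px13 f) t x x1)).
  { unfold px13 at 1. apply deriv1_eq. unfold prol1, p1.
    eapply dl_val; [solve_deriv | cbv beta; ring]. }
  unfold prol2. rewrite E0, E1, E2, E3.
  unfold phi2, Dt3. fold p1. rewrite P0, P1, P2.
  rewrite (schwarz3_t_x f), (schwarz3_t_x1 f), (schwarz3_x_x1 f) by exact Sf.
  unfold prol1, p1, phi1, Dt2. ring.
Qed.

(* Hence if f is an invariant of X^[lam,(1)], then X^[lam,(2)] multiplies
   D_t f by the factor -(D_t rho + lam rho), which does not depend on f. *)
Lemma prol2_Dt3_invariant rho phi0 lam f t x x1 x2 :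
  smooth2 rho -> smooth2 phi0 -> smooth3 lam -> smooth3 f ->
  (forall t x x1, prol1 rho phi0 lam f t x x1 = 0) ->
  prol2 rho phi0 lam (Dt3 f) t x x1 x2
  = - (Dt2 rho t x x1 + lam t x x1 * rho t x) * Dt3 f t x x1 x2.
Proof.
  intros Sr Sp Sl Sf Hinv. rewrite prol2_Dt3 by assumption.
  assert (Hzero : prol1 rho phi0 lam f = fun _ _ _ => 0) by (funext3; apply Hinv).
  rewrite Hzero. unfold Dt3, pt3, px3, px13. rewrite !deriv1_const. ring.
Qed.

(** * The complete system of invariants {z, zeta, zeta_z} *)

(* A first-order operator with coefficients c_i that multiplies n and d by the
   same factor k annihilates n / d (quotient rule, pointwise form). *)
Lemma operator_quotient (c0 c1 c2 c3 k n n0 n1 n2 n3 d d0 d1 d2 d3 : R) :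
  d <> 0 ->
  c0 * n0 + c1 * n1 + c2 * n2 + c3 * n3 = k * n ->
  c0 * d0 + c1 * d1 + c2 * d2 + c3 * d3 = k * d ->
  c0 * ((n0 * d - d0 * n) / d²) + c1 * ((n1 * d - d1 * n) / d²)
  + c2 * ((n2 * d - d2 * n) / d²) + c3 * ((n3 * d - d3 * n) / d²) = 0.
Proof.
  intros Hd Hn Hdk.
  transitivity (((c0 * n0 + c1 * n1 + c2 * n2 + c3 * n3) * d
                 - (c0 * d0 + c1 * d1 + c2 * d2 + c3 * d3) * n) / d²).
  - unfold Rsqr. field. exact Hd.
  - rewrite Hn, Hdk. unfold Rsqr. field. exact Hd.
Qed.

Lemma zeta_z_invariant rho phi0 lam z zeta t x x1 x2 :
  smooth2 rho -> smooth2 phi0 -> smooth3 lam -> smooth2 z -> smooth3 zeta ->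
  (forall t x, rho t x * pt2 z t x + phi0 t x * px2 z t x = 0) ->
  (forall t x x1, prol1 rho phi0 lam zeta t x x1 = 0) ->
  Dt2 z t x x1 <> 0 ->
  prol2 rho phi0 lam (zeta_z z zeta) t x x1 x2 = 0.
Proof.
  intros Sr Sp Sl Sz Szeta Iz Izeta Hnz.
  set (zz := fun t x (_ : R) => z t x).
  assert (Szz : smooth3 zz) by exact Sz.
  assert (zz_x1 : forall t x x1, px13 zz t x x1 = 0) by (intros; exact (deriv1_const _ _)).
  assert (Izz : forall t x x1, prol1 rho phi0 lam zz t x x1 = 0).
  { intros. unfold prol1. rewrite zz_x1, Rmult_0_r, Rplus_0_r. apply Iz. }
  assert (Dt3_zz : Dt3 zz = fun t x x1 _ => Dt2 z t x x1).
  { funext4. unfold Dt3. rewrite zz_x1, Rmult_0_r, Rplus_0_r. reflexivity. }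
  assert (Ezeta_z : zeta_z z zeta = fun a b c d => Dt3 zeta a b c d / Dt3 zz a b c d)
    by (rewrite Dt3_zz; reflexivity).
  pose proof (prol2_Dt3_invariant rho phi0 lam zeta t x x1 x2 Sr Sp Sl Szeta Izeta) as GN.
  pose proof (prol2_Dt3_invariant rho phi0 lam zz t x x1 x2 Sr Sp Sl Szz Izz) as GD.
  unfold prol2, pt4, px4, px14, pw4 in GN, GD |- *.
  rewrite Ezeta_z, !pd4_div; try (apply smooth_D4; solve_smooth);
    [|rewrite Dt3_zz; exact Hnz ..].
  eapply operator_quotient; [rewrite Dt3_zz; exact Hnz | exact GN | exact GD].
Qed.

Lemma pd4_lift2_const k g t x x1 w : (2 <= k)%nat -> pd4 k (lift2 g) t x x1 w = 0.
Proof. intro Hk. apply pd4_val. destruct k as [|[|[|k]]]; try lia; exact (dl_const _ _). Qed.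
Lemma pd4_lift3_const k g t x x1 w : (3 <= k)%nat -> pd4 k (lift3 g) t x x1 w = 0.
Proof. intro Hk. apply pd4_val. destruct k as [|[|[|k]]]; try lia; exact (dl_const _ _). Qed.

Lemma func_indep3_minor f g h i j t x x1 x2 :
  (i < j)%nat -> (j < 3)%nat ->
  pd4 3 f t x x1 x2 = 0 -> pd4 3 g t x x1 x2 = 0 -> pd4 3 h t x x1 x2 <> 0 ->
  pd4 i f t x x1 x2 * pd4 j g t x x1 x2 - pd4 j f t x x1 x2 * pd4 i g t x x1 x2 <> 0 ->
  func_indep3 f g h t x x1 x2.
Proof.
  intros Hij Hj Hf Hg Hh Hminor. exists i, j, 3%nat. do 3 (split; [lia|]).
  unfold det3. rewrite Hf, Hg. intro Hdet.
  apply (Rmult_integral_contrapositive_currified _ _ Hh Hminor).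
  rewrite <- Hdet. ring.
Qed.

(* zeta_z depends on x2 through D_t zeta = ... + x2 zeta_x1, so it is
   independent of z and zeta. *)
Lemma zeta_z_independent z zeta t x x1 x2 :
  smooth3 zeta -> func_indep2 z zeta t x x1 -> px13 zeta t x x1 <> 0 ->
  Dt2 z t x x1 <> 0 ->
  func_indep3 (lift2 z) (lift3 zeta) (zeta_z z zeta) t x x1 x2.
Proof.
  intros Szeta Hind Hx1 Hnz.
  assert (Hx2 : pd4 3 (zeta_z z zeta) t x x1 x2 = px13 zeta t x x1 * / Dt2 z t x x1).
  { apply pd4_val. cbv beta iota delta [slice4 pick4 zeta_z Dt3 Rdiv].
    eapply dl_val; [solve_deriv | cbv beta; ring]. }
  assert (Hx2nz : pd4 3 (zeta_z z zeta) t x x1 x2 <> 0).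
  { rewrite Hx2. apply Rmult_integral_contrapositive_currified; [exact Hx1|].
    apply Rinv_neq_0_compat, Hnz. }
  assert (Hz3 : pd4 3 (lift2 z) t x x1 x2 = 0) by (apply pd4_lift2_const; lia).
  assert (Hzeta3 : pd4 3 (lift3 zeta) t x x1 x2 = 0) by (apply pd4_lift3_const; lia).
  assert (Hz2 : pd4 2 (lift2 z) t x x1 x2 = 0) by (apply pd4_lift2_const; lia).
  destruct Hind as [H01 | [H02 | H12]].
  - apply (func_indep3_minor _ _ _ 0 1); try lia; assumption.
  - apply (func_indep3_minor _ _ _ 0 2); try lia; try assumption.
    rewrite Hz2, Rmult_0_l, Rminus_0_r. exact H02.
  - apply (func_indep3_minor _ _ _ 1 2); try lia; try assumption.
    rewrite Hz2, Rmult_0_l, Rminus_0_r. exact H12.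
Qed.

Lemma complete_invariants_intro rho phi0 lam z zeta :
  smooth2 rho -> smooth2 phi0 -> smooth3 lam -> smooth2 z -> smooth3 zeta ->
  (forall t x, rho t x * pt2 z t x + phi0 t x * px2 z t x = 0) ->
  (forall t x x1, prol1 rho phi0 lam zeta t x x1 = 0) ->
  (forall t x x1, func_indep2 z zeta t x x1) ->
  (forall t x x1, px13 zeta t x x1 <> 0) ->
  complete_invariants rho phi0 lam z zeta.
Proof.
  intros Sr Sp Sl Sz Szeta Iz Izeta Hind Hx1.
  split; [exact Iz|]. split; [exact Izeta|]. split; [exact Hind|]. split.
  - intros t x x1 x2 Hnz. exact (zeta_z_invariant rho phi0 lam z zeta t x x1 x2
                                   Sr Sp Sl Sz Szeta Iz Izeta Hnz).
  - intros t x x1 x2 Hnz. exact (zeta_z_independent z zeta t x x1 x2 Szeta (Hind _ _ _) (Hx1 _ _ _) Hnz).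
Qed.

(** * The total derivative on Delta *)

Lemma Atot_mult F H f g t x x1 w : D4 f -> D4 g ->
  Atot F H (fun a b c d => f a b c d * g a b c d) t x x1 w
  = Atot F H f t x x1 w * g t x x1 w + f t x x1 w * Atot F H g t x x1 w.
Proof. intros Df Dg. unfold Atot, pt4, px4, px14, pw4. rewrite !pd4_mult by assumption. ring. Qed.

Lemma Atot_lift2 F H g t x x1 w : Atot F H (lift2 g) t x x1 w = Dt2 g t x x1.
Proof.
  unfold Atot, pt4, px4, px14, pw4. rewrite (pd4_lift2_const 2), (pd4_lift2_const 3) by lia.
  change (pd4 0 (lift2 g) t x x1 w) with (pt2 g t x).
  change (pd4 1 (lift2 g) t x x1 w) with (px2 g t x).
  unfold Dt2. ring.
Qed.
Lemma Atot_lift3 F H g t x x1 w : Atot F H (lift3 g) t x x1 w = Dt3 g t x x1 (F t x x1).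
Proof.
  unfold Atot, pt4, px4, px14, pw4. rewrite (pd4_lift3_const 3) by lia.
  change (pd4 0 (lift3 g) t x x1 w) with (pt3 g t x x1).
  change (pd4 1 (lift3 g) t x x1 w) with (px3 g t x x1).
  change (pd4 2 (lift3 g) t x x1 w) with (px13 g t x x1).
  unfold Dt3. ring.
Qed.

(** * Symmetries with factorized coefficients *)

Ltac zero_by V := match type of V with ?e = 0 => transitivity e; [ring | exact V] end.

Definition Atot_ratio (F H : fun3) (mu : fun4) : fun4 :=
  fun t x x1 w => Atot F H mu t x x1 w / mu t x x1 w.

Section FactorizedSymmetry.

Variables (F H : fun3) (xi eta0 mu : fun4) (rho phi0 : fun2).
Hypotheses (HF : smooth3 F) (HH : smooth3 H).
Hypotheses (Hmu : smooth4 mu) (Hrho : smooth2 rho) (Hphi0 : smooth2 phi0).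
Hypothesis Hmu0 : forall t x x1 w, mu t x x1 w <> 0.
Hypothesis HX0 : forall t x, rho t x <> 0 \/ phi0 t x <> 0.
Hypothesis Hxi : xi = fun t x x1 w => rho t x * mu t x x1 w.
Hypothesis Heta0 : eta0 = fun t x x1 w => phi0 t x * mu t x x1 w.

Lemma eta1_factor t x x1 w :
  eta1 F H xi eta0 t x x1 w
  = mu t x x1 w * (Dt2 phi0 t x x1 - Dt2 rho t x x1 * x1
                   + Atot_ratio F H mu t x x1 w * (phi0 t x - rho t x * x1)).
Proof.
  unfold eta1, Atot_ratio. rewrite Hxi, Heta0.
  rewrite (Atot_mult F H (lift2 phi0) mu), (Atot_mult F H (lift2 rho) mu), !Atot_lift2
    by (apply smooth_D4; assumption).
  unfold lift2. field. apply Hmu0.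
Qed.

Lemma zeta_invariance_reduced zeta :
  (forall t x x1 w, xi t x x1 w * pt3 zeta t x x1 + eta0 t x x1 w * px3 zeta t x x1
                    + eta1 F H xi eta0 t x x1 w * px13 zeta t x x1 = 0) ->
  forall t x x1 w, rho t x * pt3 zeta t x x1 + phi0 t x * px3 zeta t x x1
    + (Dt2 phi0 t x x1 - Dt2 rho t x x1 * x1
       + Atot_ratio F H mu t x x1 w * (phi0 t x - rho t x * x1)) * px13 zeta t x x1 = 0.
Proof.
  intros Hvzeta t x x1 w. pose proof (Hvzeta t x x1 w) as V.
  rewrite eta1_factor, Hxi, Heta0 in V. cbv beta in V.
  apply (Rmult_eq_reg_l (mu t x x1 w)); [|apply Hmu0]. rewrite Rmult_0_r. zero_by V.
Qed.

(* v^(1)(zeta) = 0 forces A(mu)/mu to be independent of w: its w-variation is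
   multiplied by (phi0 - rho x1) zeta_x1, which vanishes only on a graph. *)
Lemma ratio_indep_w zeta :
  smooth3 zeta -> (forall t x x1, px13 zeta t x x1 <> 0) ->
  (forall t x x1 w, xi t x x1 w * pt3 zeta t x x1 + eta0 t x x1 w * px3 zeta t x x1
                    + eta1 F H xi eta0 t x x1 w * px13 zeta t x x1 = 0) ->
  forall t x x1 w w', Atot_ratio F H mu t x x1 w = Atot_ratio F H mu t x x1 w'.
Proof.
  intros Szeta Hx1 Hvzeta.
  apply (indep_w_by_continuity _ (fun t x => phi0 t x / rho t x)).
  { apply smooth_C4. unfold Atot_ratio, Atot. solve_smooth. }
  intros t x x1 w w' Hne.
  assert (Hoff : phi0 t x - rho t x * x1 <> 0).
  { destruct (Req_dec (rho t x) 0) as [E | E].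
    - rewrite E, Rmult_0_l, Rminus_0_r. destruct (HX0 t x); [contradiction | assumption].
    - intro E'. apply Hne. replace (phi0 t x) with (rho t x * x1) by lra. field. exact E. }
  pose proof (zeta_invariance_reduced zeta Hvzeta t x x1 w) as V.
  pose proof (zeta_invariance_reduced zeta Hvzeta t x x1 w') as V'.
  assert (D : (Atot_ratio F H mu t x x1 w - Atot_ratio F H mu t x x1 w')
              * ((phi0 t x - rho t x * x1) * px13 zeta t x x1) = 0).
  { match type of V with ?a = 0 => match type of V' with ?b = 0 =>
      transitivity (a - b); [ring | rewrite V, V'; ring] end end. }
  destruct (Rmult_integral _ _ D) as [D1 | D2]; [lra|].
  destruct (Rmult_integral _ _ D2) as [E | E]; [destruct (Hoff E) | destruct (Hx1 _ _ _ E)].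
Qed.

Lemma Atot_mu lam : (forall t x x1 w, Atot_ratio F H mu t x x1 w = lam t x x1) ->
  forall t x x1 w, Atot F H mu t x x1 w = mu t x x1 w * lam t x x1.
Proof. intros HA t x x1 w. rewrite <- (HA t x x1 w). unfold Atot_ratio. field. apply Hmu0. Qed.

Lemma eta1_lambda lam : (forall t x x1 w, Atot_ratio F H mu t x x1 w = lam t x x1) ->
  eta1 F H xi eta0 = fun t x x1 w => mu t x x1 w * phi1 rho phi0 lam t x x1.
Proof. intro HA. funext4. rewrite eta1_factor, HA. reflexivity. Qed.

(* The first symmetry condition of (S_H) is mu times the condition for
   (rho d_t + phi0 d_x, lam) to be a lambda-symmetry of x2 = F. *)
Lemma lambda_symmetry_of_factorized psi0 lam : smooth3 lam ->
  (forall t x x1 w, Atot_ratio F H mu t x x1 w = lam t x x1) ->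
  gen_symmetry F H xi eta0 psi0 -> lambda_symmetry F rho phi0 lam.
Proof.
  intros Slam HA [Hsym _] t x x1.
  pose proof (Hsym t x x1 0) as S.
  rewrite (eta1_lambda lam HA), Hxi, Heta0 in S.
  rewrite (Atot_mult F H mu (lift3 (phi1 rho phi0 lam))), (Atot_mult F H (lift2 rho) mu),
    Atot_lift3, Atot_lift2, (Atot_mu lam HA) in S by (apply smooth_D4; solve_smooth).
  unfold lift2, lift3 in S. cbv beta in S.
  apply (Rmult_eq_reg_l (mu t x x1 0)); [|apply Hmu0]. rewrite Rmult_0_r.
  unfold phi2. zero_by S.
Qed.

Lemma factorized_symmetry_reduction psi0 z zeta :
  smooth2 z -> smooth3 zeta -> gen_symmetry F H xi eta0 psi0 ->
  (forall t x x1, func_indep2 z zeta t x x1) -> (forall t x x1, px13 zeta t x x1 <> 0) ->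
  (forall t x x1 w, xi t x x1 w * pt2 z t x + eta0 t x x1 w * px2 z t x = 0) ->
  (forall t x x1 w, xi t x x1 w * pt3 zeta t x x1 + eta0 t x x1 w * px3 zeta t x x1
                    + eta1 F H xi eta0 t x x1 w * px13 zeta t x x1 = 0) ->
  exists lam : fun3, smooth3 lam
    /\ (forall t x x1 w, Atot_ratio F H mu t x x1 w = lam t x x1)
    /\ lambda_symmetry F rho phi0 lam /\ complete_invariants rho phi0 lam z zeta.
Proof.
  intros Sz Szeta Hsym Hind Hx1 Hvz Hvzeta.
  set (lam := fun t x x1 => Atot_ratio F H mu t x x1 0).
  assert (HA : forall t x x1 w, Atot_ratio F H mu t x x1 w = lam t x x1)
    by (intros; apply (ratio_indep_w zeta Szeta Hx1 Hvzeta)).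
  assert (Slam : smooth3 lam).
  { unfold smooth3. replace (lift3 lam) with (Atot_ratio F H mu) by (funext4; apply HA).
    unfold Atot_ratio, Atot. solve_smooth. }
  exists lam. split; [exact Slam|]. split; [exact HA|].
  split; [exact (lambda_symmetry_of_factorized psi0 lam Slam HA Hsym)|].
  apply complete_invariants_intro; try assumption.
  -
    intros t x. pose proof (Hvz t x 0 0) as V. rewrite Hxi, Heta0 in V. cbv beta in V.
    apply (Rmult_eq_reg_l (mu t x 0 0)); [|apply Hmu0]. rewrite Rmult_0_r. zero_by V.
  - intros t x x1. pose proof (zeta_invariance_reduced zeta Hvzeta t x x1 0) as V.
    rewrite (HA t x x1 0) in V. exact V.
Qed.

End FactorizedSymmetry.


(** * The two cases of the theorem *)

Lemma z_x_nonzero (xi eta0 : fun4) z zeta :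
  (forall t x x1 w, xi t x x1 w <> 0) ->
  (forall t x x1 w, xi t x x1 w * pt2 z t x + eta0 t x x1 w * px2 z t x = 0) ->
  (forall t x x1, func_indep2 z zeta t x x1) ->
  forall t x, px2 z t x <> 0.
Proof.
  intros Hxi0 Hvz Hind t x Hzx. pose proof (Hvz t x 0 0) as V.
  rewrite Hzx, Rmult_0_r, Rplus_0_r in V.
  destruct (Rmult_integral _ _ V) as [V0 | Vt]; [exact (Hxi0 _ _ _ _ V0)|].
  destruct (Hind t x 0) as [A | [A | A]]; apply A; rewrite ?Vt, ?Hzx; ring.
Qed.

Lemma eta0_factor (xi eta0 : fun4) z :
  (forall t x, px2 z t x <> 0) ->
  (forall t x x1 w, xi t x x1 w * pt2 z t x + eta0 t x x1 w * px2 z t x = 0) ->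
  forall t x x1 w, eta0 t x x1 w = - pt2 z t x / px2 z t x * xi t x x1 w.
Proof.
  intros Hzx Hvz t x x1 w. pose proof (Hvz t x x1 w) as V.
  apply (Rmult_eq_reg_r (px2 z t x)); [|apply Hzx].
  replace (- pt2 z t x / px2 z t x * xi t x x1 w * px2 z t x)
    with (- (xi t x x1 w * pt2 z t x)) by (field; apply Hzx).
  lra.
Qed.

Theorem theorem3p1
  (F H : R -> R -> R -> R) (xi eta0 psi0 : R -> R -> R -> R -> R)
  (z : R -> R -> R) (zeta : R -> R -> R -> R)
  (HF : smooth3 F) (HH : smooth3 H)
  (Hxi : smooth4 xi) (Heta0 : smooth4 eta0) (Hpsi0 : smooth4 psi0)
  (Hz : smooth2 z) (Hzeta : smooth3 zeta)
  (Hsym : gen_symmetry F H xi eta0 psi0)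
  (Hnonlocal : exists t x x1 w,
      (pw4 xi t x x1 w) ^ 2 + (pw4 eta0 t x x1 w) ^ 2 <> 0)
  (Hindep : forall t x x1, func_indep2 z zeta t x x1)
  (Hzeta_x1 : forall t x x1, px13 zeta t x x1 <> 0)
  (Hvz : forall t x x1 w,
      xi t x x1 w * pt2 z t x + eta0 t x x1 w * px2 z t x = 0)
  (Hvzeta : forall t x x1 w,
      xi t x x1 w * pt3 zeta t x x1 + eta0 t x x1 w * px3 zeta t x x1
      + eta1 F H xi eta0 t x x1 w * px13 zeta t x x1 = 0)
  (Hode : exists G : R -> R -> R -> R, forall t x x1 x2, Dt2 z t x x1 <> 0 ->
      (x2 = F t x x1 <-> G (z t x) (zeta t x x1) (zeta_z z zeta t x x1 x2) = 0)) :
  ((forall t x x1 w, xi t x x1 w <> 0) ->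
     exists (phi0 : R -> R -> R) (lam : R -> R -> R -> R),
       smooth2 phi0 /\ smooth3 lam /\
       (forall t x x1 w, eta0 t x x1 w / xi t x x1 w = phi0 t x) /\
       (forall t x x1 w, Atot F H xi t x x1 w / xi t x x1 w = lam t x x1) /\
       lambda_symmetry F (fun _ _ => 1) phi0 lam /\
       complete_invariants (fun _ _ => 1) phi0 lam z zeta)
  /\
  ((forall t x x1 w, xi t x x1 w = 0) ->
   (forall t x x1 w, eta0 t x x1 w <> 0) ->
     exists lam : R -> R -> R -> R,
       smooth3 lam /\
       (forall t x x1 w, Atot F H eta0 t x x1 w / eta0 t x x1 w = lam t x x1) /\
       lambda_symmetry F (fun _ _ => 0) (fun _ _ => 1) lam /\
       complete_invariants (fun _ _ => 0) (fun _ _ => 1) lam z zeta).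
Proof.
  split.
  - (* xi <> 0: mu = xi, rho = 1, phi0 = - z_t / z_x *)
    intro Hxi0.
    pose proof (z_x_nonzero xi eta0 z zeta Hxi0 Hvz Hindep) as Hzx.
    set (phi0 := fun t x => - pt2 z t x / px2 z t x).
    assert (Sphi0 : smooth2 phi0) by (unfold smooth2, lift2, phi0; solve_smooth; intros; apply Hzx).
    assert (Heta : forall t x x1 w, eta0 t x x1 w = phi0 t x * xi t x x1 w)
      by exact (eta0_factor xi eta0 z Hzx Hvz).
    destruct (factorized_symmetry_reduction F H xi eta0 xi (fun _ _ => 1) phi0
                HF HH Hxi (Sm_const 1) Sphi0 Hxi0 (fun _ _ => or_introl R1_neq_R0)
                ltac:(funext4; ring) ltac:(funext4; apply Heta)
                psi0 z zeta Hz Hzeta Hsym Hindep Hzeta_x1 Hvz Hvzeta)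
      as [lam [Slam [Hlam [Hls Hci]]]].
    exists phi0, lam. split; [exact Sphi0|]. split; [exact Slam|].
    split; [intros t x x1 w; rewrite Heta; field; apply Hxi0|].
    split; [exact Hlam|]. split; [exact Hls | exact Hci].
  - (* xi = 0: mu = eta0, rho = 0, phi0 = 1 *)
    intros Hxi0 Heta00.
    destruct (factorized_symmetry_reduction F H xi eta0 eta0 (fun _ _ => 0) (fun _ _ => 1)
                HF HH Heta0 (Sm_const 0) (Sm_const 1) Heta00 (fun _ _ => or_intror R1_neq_R0)
                ltac:(funext4; rewrite Hxi0; ring) ltac:(funext4; ring)
                psi0 z zeta Hz Hzeta Hsym Hindep Hzeta_x1 Hvz Hvzeta)
      as [lam [Slam [Hlam [Hls Hci]]]].
    exists lam. split; [exact Slam|]. split; [exact Hlam|]. split; [exact Hls | exact Hci].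
Qed.
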